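(* Let $l\ge2$, $d\ge2$ and $X=X_{l,d}$. Under the action of the torus $T$ on $\mathbb{T}^1=\mathrm{Ext}^1(\Omega^1_X,\mathcal{O}_X)$, with character group identified with $M_0=\{u\in M:\deg(u)=0\}$, one has the weight decomposition $\mathbb{T}^1=\bigoplus_{u\in\Phi}\mathbb{T}^1_u$ with $\dim\mathbb{T}^1_u=1$ for every $u\in\Phi$, where $\Psi=\{u\in M_0:u+\epsilon\in\sigma^\vee\}$ and $\Phi=\Psi\setminus\{e_{ij}-e_{i'j'}:1\le i,i'\le l,\ 1\le j,j'\le d\}$.
   Context: $X_{l,d}=\{x_{11}\cdots x_{1d}+\dots+x_{l1}\cdots x_{ld}=0\}\subset\mathbb{P}^{ld-1}$. $\mathbf{Z}^{ld}$ has basis $e_{ij}$, $\epsilon_i=\sum_je_{ij}$, $M=\mathbf{Z}^{ld}/\langle\epsilon_1-\epsilon_2,\dots,\epsilon_1-\epsilon_l\rangle$ with images $e_{ij}$ and $\epsilon=\epsilon_1=\dots=\epsilon_l$; $\deg\colon M\to\mathbf{Z}$, $e_{ij}\mapsto1$; $\sigma^\vee$ is the cone in $M_\mathbf{R}$ generated by the $e_{ij}$. $\widetilde T=\{\mathrm{diag}(\lambda_{ij}):\prod_j\lambda_{1j}=\dots=\prod_j\lambda_{lj}\}\cong\mathrm{Spec}\,\mathbf{C}[M]$ (character $e_{ij}\leftrightarrow\lambda_{ij}$), $T=\widetilde T/\mathbf{C}^*$ with character group $M_0$. $T$ acts on $\mathbb{T}^1$, identified with $\mathbf{C}[x_{ij}]_d/\mathrm{span}\langle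 x_{i'j'}\prod_{k\ne j}x_{ik}\rangle$, by $\lambda\cdot g(x)=g(\lambda\cdot x)/(\lambda_{11}\cdots\lambda_{1d})$. *)

From HB Require Import structures.
From mathcomp Require Import all_boot all_order all_algebra.
From mathcomp Require Import reals.
From mathcomp Require Import complex.
Set Implicit Arguments. Unset Strict Implicit. Unset Printing Implicit Defensive.
Import Order.TTheory GRing.Theory Num.Theory.
Local Open Scope ring_scope.

Section XLD.
Variables (l d : nat).

Definition XIdx := ('I_l * 'I_d)%type.

(* elements of Z^{ld} (representatives of elements of M) *)
Definition XZLD := {ffun XIdx -> int}.

Definition Xe (p : XIdx) : XZLD := [ffun q => (q == p)%:Z].
Definition Xeps (i : 'I_l) : XZLD := [ffun q : XIdx => (q.1 == i)%:Z].

(* u = v in M = Z^{ld} / <eps_1 - eps_2, ..., eps_1 - eps_l>: the difference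
   lies in the sublattice generated by the eps_i - eps_k
   (the same sublattice as the one generated by eps_1 - eps_i). *)
Definition XMeq (u v : XZLD) : Prop :=
  exists a : 'I_l -> 'I_l -> int,
    u - v = \sum_(i < l) \sum_(k < l) (Xeps i - Xeps k) *~ a i k.

Definition XdegM (u : XZLD) : int := \sum_(p : XIdx) u p.
Definition XinM0 (u : XZLD) : Prop := XdegM u = 0.

(* x in M_R lies in the cone sigma^vee generated by the e_ij:
   x = sum c_ij e_ij (c_ij >= 0) modulo the real span of the eps_i - eps_k *)
Definition Xin_sigma_dual (R : realType) (x : XZLD) : Prop :=
  exists (c : XIdx -> R) (a : 'I_l -> 'I_l -> R),
    (forall p, 0 <= c p) /\
    forall p : XIdx, (x p)%:~R = c p +
      \sum_(i < l) \sum_(k < l) a i k * ((p.1 == i)%:R - (p.1 == k)%:R).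

(* XPsi = { u in M_0 : u + eps in sigma^vee }, with eps = eps_1 = image of Xeps{i1} *)
Definition XPsi (R : realType) (i1 : 'I_l) (u : XZLD) : Prop :=
  XinM0 u /\ Xin_sigma_dual R (u + Xeps i1).

Definition XPhi (R : realType) (i1 : 'I_l) (u : XZLD) : Prop :=
  XPsi R i1 u /\ ~ (exists p q : XIdx, XMeq u (Xe p - Xe q)).

Definition Xexpo_ok (a : {ffun XIdx -> 'I_d.+1}) : bool :=
  (\sum_(p : XIdx) (a p : nat) == d)%N.
Definition XMon := {a : {ffun XIdx -> 'I_d.+1} | Xexpo_ok a}.
Definition Xexpo (a : XMon) (p : XIdx) : nat := val a p.

(* C[x_ij]_d, homogeneous polynomials of degree d, as coefficient vectors *)
Definition XPoly (C : fieldType) := {ffun XMon -> C^o}.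

(* exponent of the monomial x_{i'j'} prod_{k <> j} x_{ik} *)
Definition Xrel_expo (i : 'I_l) (j : 'I_d) (i' : 'I_l) (j' : 'I_d) (p : XIdx) : nat :=
  ((p.1 == i) && (p.2 != j)) + (p == (i', j')).

Definition Xis_rel_mon (a : XMon) : bool :=
  [exists i : 'I_l, exists j : 'I_d, exists i' : 'I_l, exists j' : 'I_d,
     [forall p : XIdx, Xexpo a p == Xrel_expo i j i' j' p]].

Definition Xmonv (C : fieldType) (a : XMon) : XPoly C := [ffun b => (b == a)%:R].

Definition XWsp (C : fieldType) : {vspace XPoly C} :=
  <<[seq Xmonv C a | a <- enum [pred a : XMon | Xis_rel_mon a]]>>%VS.

Definition Xin_Ttilde (C : fieldType) (lam : XIdx -> C) : Prop :=
  (forall p, lam p != 0) /\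
  forall i k : 'I_l, \prod_(j < d) lam (i, j) = \prod_(j < d) lam (k, j).

(* action lambda . g(x) = g(lambda . x) / (lambda_11 ... lambda_1d) on
   coefficient vectors: the coefficient of x^a gets multiplied by lambda^a *)
Definition Xact (C : fieldType) (i1 : 'I_l) (lam : XIdx -> C) (f : XPoly C) : XPoly C :=
  [ffun a : XMon => f a * (\prod_(p : XIdx) lam p ^+ Xexpo a p)
                       / \prod_(j < d) lam (i1, j)].

Definition Xchr (C : fieldType) (u : XZLD) (lam : XIdx -> C) : C :=
  \prod_(p : XIdx) lam p ^ u p.

(* f in C[x]_d represents an element of the weight space T^1_u of
   T^1 = C[x]_d / W, i.e. lambda.[f] = chi^u(lambda) [f] in T^1 for all lambda *)
Definition Xin_weight (C : fieldType) (i1 : 'I_l) (u : XZLD) (f : XPoly C) : Prop :=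
  forall lam, Xin_Ttilde lam -> (Xact i1 lam f - Xchr u lam *: f \in XWsp C)%VS.

End XLD.

Definition Xrow1 (l : nat) (hl : (1 < l)%N) : 'I_l := Ordinal (ltnW hl).

(* A monomial x^a of degree d is a T~-eigenvector of weight a - eps, and two
   characters of T~ agree exactly when their difference lies in the lattice L
   spanned by the eps_i - eps_k, i.e. in the kernel of Z^{ld} -> M; characters
   outside L are separated by a diagonal matrix whose entries are powers of 2.
   So every weight space of C[x]_d / W is spanned by monomials.  If two
   nonnegative exponent vectors are congruent modulo L, either they are equal
   or the first one is a full row x_{r1} ... x_{rd}, which is a generator of W;
   hence each weight of a monomial outside W is carried by exactly one such
   monomial.  These weights are exactly Phi: a point of Psi is moved inside its
   L-class to a nonnegative vector by subtracting the row minima and adding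
   their (nonnegative) total to row i1, and its class avoids the e_ij - e_i'j'
   exactly when the resulting monomial is not a generator of W. *)
From HB Require Import structures.
From mathcomp Require Import all_boot all_order all_algebra.
From mathcomp Require Import reals complex.
From mathcomp Require Import ring.
Import Order.TTheory GRing.Theory Num.Theory.
Local Open Scope ring_scope.
Set Implicit Arguments. Unset Strict Implicit. Unset Printing Implicit Defensive.

Lemma big_pairE (T : Type) (idx : T) (op : Monoid.com_law idx) (I J : finType)
    (F : I * J -> T) :
  \big[op/idx]_p F p = \big[op/idx]_i \big[op/idx]_j F (i, j).
Proof. by rewrite pair_bigA; apply: eq_bigr => -[]. Qed.

Lemma sum_delta (I : finType) (T : nmodType) (i : I) (x : I -> T) :
  \sum_r x r *+ (r == i) = x i.
Proof. by rewrite (bigD1 i) //= eqxx big1 ?addr0 // => r /negbTE ->. Qed.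

Section Lattice.
Variables (l d : nat).
Local Notation I := (XIdx l d).
Local Notation Z := (XZLD l d).

Definition row_constant (v : Z) : bool :=
  [forall p : I, forall q : I, (p.1 == q.1) ==> (v p == v q)].

(* The lattice spanned by the eps_i - eps_k: row-constant vectors of degree 0. *)
Definition epsL (v : Z) : bool := row_constant v && (XdegM v == 0).

Lemma row_constantP (v : Z) :
  reflect (forall p q : I, p.1 = q.1 -> v p = v q) (row_constant v).
Proof.
apply: (iffP forallP) => [H p q e|H p].
  by move: (forallP (H p) q); rewrite e eqxx => /eqP.
by apply/forallP => q; apply/implyP => /eqP e; rewrite (H p q e).
Qed.

Lemma XdegMD (u v : Z) : XdegM (u + v) = XdegM u + XdegM v.
Proof. by rewrite /XdegM -big_split; apply: eq_bigr => p _; rewrite ffunE. Qed.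

Lemma XdegMN (u : Z) : XdegM (- u) = - XdegM u.
Proof. by rewrite /XdegM -sumrN; apply: eq_bigr => p _; rewrite ffunE. Qed.

Lemma XdegMB (u v : Z) : XdegM (u - v) = XdegM u - XdegM v.
Proof. by rewrite XdegMD XdegMN. Qed.

Lemma XdegMMz (u : Z) n : XdegM (u *~ n) = XdegM u *~ n.
Proof. by rewrite /XdegM mulrz_suml; apply: eq_bigr => p _; rewrite ffunMzE. Qed.

Lemma XdegM_sum (T : Type) (r : seq T) (F : T -> Z) :
  XdegM (\sum_(x <- r) F x) = \sum_(x <- r) XdegM (F x).
Proof.
elim: r => [|x r IH]; last by rewrite !big_cons XdegMD IH.
by rewrite !big_nil /XdegM big1 // => p _; rewrite ffunE.
Qed.

Lemma XdegM_eps (i : 'I_l) : XdegM (Xeps d i) = d%:Z.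
Proof.
rewrite /XdegM big_pairE -(sum_delta i (fun=> d%:Z)); apply: eq_bigr => r _.
rewrite (eq_bigr (fun=> (r == i)%:Z)) => [|j _]; last by rewrite ffunE.
by rewrite sumr_const card_ord; case: (r == i); rewrite ?mul0rn ?mulr0n // mulr1n natz.
Qed.

Lemma XdegM_row_constant (v : Z) (j0 : 'I_d) :
  row_constant v -> XdegM v = (\sum_(i < l) v (i, j0)) *+ d.
Proof.
move/row_constantP => H; rewrite /XdegM big_pairE -sumrMnl; apply: eq_bigr => i _.
by rewrite (eq_bigr (fun=> v (i, j0))) ?sumr_const ?card_ord // => j _; apply: H.
Qed.

Lemma epsL_col_sum (v : Z) (j0 : 'I_d) : epsL v -> \sum_(i < l) v (i, j0) = 0.
Proof.
case/andP=> rc /eqP; rewrite (XdegM_row_constant j0 rc) => /eqP.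
have d_gt0 : (0 < d)%N := leq_ltn_trans (leq0n _) (ltn_ord j0).
by rewrite mulrn_eq0 => /orP[/eqP d0|/eqP //]; rewrite d0 in d_gt0.
Qed.

Lemma epsL0 : epsL 0.
Proof.
apply/andP; split; first by apply/row_constantP => p q _; rewrite !ffunE.
by rewrite /XdegM big1 // => p _; rewrite ffunE.
Qed.

Lemma epsLD (u v : Z) : epsL u -> epsL v -> epsL (u + v).
Proof.
case/andP=> /row_constantP ru /eqP du /andP[/row_constantP rv /eqP dv].
apply/andP; split; last by rewrite XdegMD du dv addr0.
by apply/row_constantP => p q e; rewrite !ffunE (ru p q e) (rv p q e).
Qed.

Lemma epsLN (u : Z) : epsL u -> epsL (- u).
Proof.
case/andP=> /row_constantP ru /eqP du; apply/andP; split; last by rewrite XdegMN du oppr0.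
by apply/row_constantP => p q e; rewrite !ffunE (ru p q e).
Qed.

Lemma epsL_sym (u v : Z) : epsL (u - v) -> epsL (v - u).
Proof. by move/epsLN; rewrite opprB. Qed.

Lemma epsL_trans (u v w : Z) : epsL (u - v) -> epsL (v - w) -> epsL (u - w).
Proof. by move=> h1 h2; have := epsLD h1 h2; rewrite addrA subrK. Qed.

Lemma epsL_eps (i k : 'I_l) : epsL (Xeps d i - Xeps d k).
Proof.
apply/andP; split; last by rewrite XdegMB !XdegM_eps subrr.
by apply/row_constantP => p q e; rewrite !ffunE e.
Qed.

Lemma XMeq_epsL (u v : Z) : XMeq u v -> epsL (u - v).
Proof.
case=> a ->; apply/andP; split.
  apply/row_constantP => p q e; rewrite !sum_ffunE; apply: eq_bigr => i _.
  by rewrite !sum_ffunE; apply: eq_bigr => k _; rewrite !ffunMzE !ffunE e.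
rewrite XdegM_sum big1 // => i _; rewrite XdegM_sum big1 // => k _.
by rewrite XdegMMz XdegMB !XdegM_eps subrr mul0rz.
Qed.

Lemma epsL_XMeq (i1 : 'I_l) (j0 : 'I_d) (u v : Z) : epsL (u - v) -> XMeq u v.
Proof.
move=> uvL; have st := epsL_col_sum j0 uvL; case/andP: uvL => rc _.
set w := u - v in rc st *.
exists (fun i k => if k == i1 then w (i, j0) else 0).
apply/ffunP => p; rewrite sum_ffunE.
transitivity (\sum_(i < l) (w (i, j0) *+ (i == p.1) - w (i, j0) *+ (p.1 == i1))).
  rewrite sumrB sum_delta sumrMnl st mul0rn subr0.
  by move/row_constantP: rc => /(_ p (p.1, j0)) ->.
apply: eq_bigr => i _; rewrite sum_ffunE (bigD1 i1) //= eqxx big1 ?addr0.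
  rewrite ffunMzE !ffunE eq_sym.
  by case: (p.1 == i); case: (p.1 == i1);
    rewrite /= ?(mulr1n, mulr0n, subrr, subr0, sub0r, mul0rz, mulNrz, intz).
by move=> k /negbTE ->; rewrite ffunMzE mulr0z.
Qed.

End Lattice.

Section Monomials.
Variables (l d : nat).
Local Notation I := (XIdx l d).
Local Notation Z := (XZLD l d).
Local Notation XMon := (XMon l d).

Definition expv (a : XMon) : Z := [ffun p => (Xexpo a p)%:Z].

(* The weight of the monomial x^a under T~, a shifted by the character
   (lambda_{i1,1} ... lambda_{i1,d})^-1 in the definition of the action. *)
Definition wt (i1 : 'I_l) (a : XMon) : Z := expv a - Xeps d i1.

Lemma sum_Posz (F : I -> nat) : \sum_p (F p)%:Z = (\sum_p F p)%N%:Z.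
Proof. by rewrite (big_morph Posz PoszD (erefl 0%:Z)). Qed.

Lemma Xexpo_sum (a : XMon) : (\sum_p Xexpo a p)%N = d.
Proof. by case: a => f H; apply/eqP. Qed.

Lemma XdegM_expv (a : XMon) : XdegM (expv a) = d%:Z.
Proof.
rewrite /XdegM (eq_bigr (fun p => (Xexpo a p)%:Z)) => [|p _]; last by rewrite ffunE.
by rewrite sum_Posz Xexpo_sum.
Qed.

Lemma Xexpo_inj (a b : XMon) : Xexpo a =1 Xexpo b -> a = b.
Proof. by move=> H; apply/val_inj/ffunP => p; apply/val_inj; apply: H. Qed.

Lemma expv_surj (b : Z) : (forall p, 0 <= b p) -> XdegM b = d%:Z ->
  exists a : XMon, expv a = b.
Proof.
move=> b_ge0 db.
have b_lt p : (`|b p| < d.+1)%N.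
  rewrite ltnS -lez_nat gez0_abs // -db /XdegM (bigD1 p) //= lerDl.
  by apply: sumr_ge0 => q _.
pose f : {ffun I -> 'I_d.+1} := [ffun p => inord `|b p|].
have f_ok : Xexpo_ok f.
  apply/eqP/eqP; rewrite -eqz_nat -sum_Posz -db /XdegM.
  by apply/eqP/eq_bigr => p _; rewrite ffunE inordK // gez0_abs.
exists (exist _ f f_ok); apply/ffunP => p.
by rewrite !ffunE /Xexpo /= ffunE inordK // gez0_abs.
Qed.

Lemma row_mon_rel (j0 : 'I_d) (a : XMon) (r : 'I_l) :
  (forall p, Xexpo a p = (p.1 == r)) -> Xis_rel_mon a.
Proof.
move=> H; apply/existsP; exists r; apply/existsP; exists j0.
apply/existsP; exists r; apply/existsP; exists j0; apply/forallP => -[i j].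
by rewrite H /Xrel_expo /= xpair_eqE; case: (i == r); case: (j == j0).
Qed.

Lemma Xrel_expo_vec (i : 'I_l) (j : 'I_d) (i' : 'I_l) (j' : 'I_d) :
  [ffun p => (Xrel_expo i j i' j' p)%:Z] = Xeps d i - Xe (i, j) + Xe (i', j') :> Z.
Proof.
apply/ffunP => -[a b]; rewrite !ffunE /Xrel_expo /= PoszD; congr (_ + _).
by rewrite xpair_eqE; case: (a == i); case: (b == j).
Qed.

Lemma Xexpo_ge_row (a : XMon) (r : 'I_l) :
  (forall p, p.1 == r <= Xexpo a p)%N -> forall p, Xexpo a p = (p.1 == r).
Proof.
move=> ge_row.
have row_sum : (\sum_(p : I) (p.1 == r))%N = d.
  apply/eqP; rewrite -eqz_nat -sum_Posz -(XdegM_eps d r) /XdegM.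
  by apply/eqP/eq_bigr => p _; rewrite ffunE.
have excess0 : (\sum_p (Xexpo a p - (p.1 == r)))%N = 0%N.
  have : (\sum_p Xexpo a p = \sum_(p : I) (p.1 == r))%N by rewrite Xexpo_sum row_sum.
  rewrite (eq_bigr (fun p => (p.1 == r) + (Xexpo a p - (p.1 == r))))%N => [|p _].
    by rewrite big_split /= -[RHS]addn0 => /eqP; rewrite eqn_add2l => /eqP.
  by rewrite subnKC.
move=> p; apply/eqP; rewrite eqn_leq ge_row andbT -subn_eq0.
by move/eqP: excess0; rewrite sum_nat_eq0 => /forallP /(_ p).
Qed.

(* If some row of the row-constant difference is positive, x^a dominates, hence
   equals, that full row; otherwise all rows vanish since they sum to 0. *)
Lemma expv_epsL_cases (j0 : 'I_d) (a : XMon) (b : Z) :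
  (forall p, 0 <= b p) -> epsL (expv a - b) ->
  expv a = b \/ exists r, forall p, Xexpo a p = (p.1 == r).
Proof.
move=> b_ge0 abL; have col0 := epsL_col_sum j0 abL.
case/andP: abL => /row_constantP rc _; set s := expv a - b in rc col0.
have s_row p : s p = s (p.1, j0) by apply: rc.
case: (boolP [exists r, 0 < s (r, j0)]) => [/existsP[r s_pos]|/existsPn s_npos].
  right; exists r; apply: Xexpo_ge_row => p.
  case: eqP => [p_r|//]; rewrite -(ltz_nat 0).
  have s_r : s (r, j0) = (Xexpo a p)%:Z - b p by rewrite -p_r -s_row !ffunE.
  by apply: lt_le_trans s_pos _; rewrite s_r lerBlDr lerDl.
left; have s0 r : s (r, j0) = 0.
  have sN_ge0 i : true -> 0 <= - s (i, j0) by rewrite oppr_ge0 leNgt s_npos.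
  have sN_sum : \sum_i - s (i, j0) = 0 by rewrite sumrN col0 oppr0.
  by apply/eqP; rewrite -oppr_eq0 (psumr_eq0P sN_ge0 sN_sum).
apply/eqP; rewrite -subr_eq0; apply/eqP/ffunP => p.
by rewrite [RHS]ffunE s_row s0.
Qed.

Lemma expv_epsL_nonrel (j0 : 'I_d) (a : XMon) (b : Z) :
  (forall p, 0 <= b p) -> epsL (expv a - b) -> ~~ Xis_rel_mon a -> expv a = b.
Proof.
move=> b_ge0 abL; case: (expv_epsL_cases j0 b_ge0 abL) => // -[r H].
by rewrite (row_mon_rel j0 H).
Qed.

End Monomials.

Section Phi.
Variables (R : realType) (l d : nat) (i1 : 'I_l) (j0 : 'I_d).
Local Notation I := (XIdx l d).
Local Notation Z := (XZLD l d).
Local Notation XMon := (XMon l d).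

Lemma wt_rel_epsL (a : XMon) (i : 'I_l) (j : 'I_d) (i' : 'I_l) (j' : 'I_d) :
  Xexpo a =1 Xrel_expo i j i' j' -> epsL (wt i1 a - (Xe (i', j') - Xe (i, j))).
Proof.
move=> a_rel.
have -> : wt i1 a - (Xe (i', j') - Xe (i, j)) = Xeps d i - Xeps d i1.
  apply/ffunP => p; move/ffunP: (Xrel_expo_vec i j i' j') => /(_ p).
  by rewrite /wt !ffunE -a_rel => ->; ring.
exact: epsL_eps.
Qed.

Lemma wt_nonrel_notin_e (a : XMon) : ~~ Xis_rel_mon a ->
  ~ (exists p q : I, XMeq (wt i1 a) (Xe p - Xe q)).
Proof.
move=> nrel [[i' j'] [[i j] /XMeq_epsL aL]].
pose b : Z := [ffun p => (Xrel_expo i j i' j' p)%:Z].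
have abL : epsL (expv a - b).
  have -> : expv a - b = (wt i1 a - (Xe (i', j') - Xe (i, j))) + (Xeps d i1 - Xeps d i).
    by rewrite /b Xrel_expo_vec; apply/ffunP => p; rewrite /wt !ffunE; ring.
  exact/epsLD/epsL_eps.
have b_ge0 p : 0 <= b p by rewrite ffunE.
have /ffunP ab := expv_epsL_nonrel j0 b_ge0 abL nrel; move/negP: nrel; apply.
apply/existsP; exists i; apply/existsP; exists j; apply/existsP; exists i'.
apply/existsP; exists j'; apply/forallP => p.
by move: (ab p); rewrite !ffunE => -[->].
Qed.

Lemma wt_nonrel_Phi (a : XMon) : ~~ Xis_rel_mon a -> XPhi R i1 (wt i1 a).
Proof.
move=> nrel; split; last exact: wt_nonrel_notin_e.
split; first by rewrite /XinM0 /wt XdegMB XdegM_expv XdegM_eps subrr.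
exists (fun p => (Xexpo a p)%:R), (fun _ _ => 0); split=> p; first exact: ler0n.
rewrite /wt subrK ffunE big1 ?addr0 // => i _; rewrite big1 // => k _; exact: mul0r.
Qed.

(* Subtract from each row its minimum m_r, then add S = sum_r m_r (which
   dominates the vanishing sum of the real row shifts) back to row i1. *)
Lemma sigma_dual_nonneg_rep (x : Z) : Xin_sigma_dual R x ->
  exists2 b : Z, (forall p, 0 <= b p) & epsL (x - b).
Proof.
case=> c [sh [c_ge0 x_eq]].
pose tau (r : 'I_l) : R :=
  \sum_(i < l) \sum_(k < l) sh i k * ((r == i)%:R - (r == k)%:R).
have tau_sum : \sum_r tau r = 0.
  rewrite /tau exchange_big big1 // => i _; rewrite exchange_big big1 // => k _.
  by rewrite -mulr_sumr sumrB !(sum_delta i (fun=> 1 : R), sum_delta k (fun=> 1 : R)) subrr mulr0.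
pose m (r : 'I_l) := x (r, [arg min_(j < j0) x (r, j)]%O).
have m_le r j : m r <= x (r, j).
  by rewrite /m; case: (@arg_minP _ _ _ j0 predT (fun j => x (r, j)) isT) => jm _; apply.
have tau_le r : tau r <= (m r)%:~R by rewrite /m x_eq lerDr.
pose S := \sum_r m r.
have S_ge0 : 0 <= S.
  rewrite -(ler0z R) /S (big_morph (fun n : int => n%:~R : R) (intrD R) (erefl _)).
  by rewrite -tau_sum; apply: ler_sum => r _.
pose t r := m r - S *+ (r == i1).
pose rv : Z := [ffun p : I => t p.1].
exists (x - rv) => [p|].
  rewrite !ffunE /t subr_ge0 lerBlDr; apply: le_trans (m_le p.1 p.2) _.
  by case: p => r j; rewrite lerDl mulrn_wge0.
have rv_row : row_constant rv by apply/row_constantP => p q e; rewrite !ffunE e.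
rewrite opprB addrC subrK /epsL rv_row (XdegM_row_constant j0 rv_row).
rewrite (eq_bigr t) => [|r _]; last by rewrite ffunE.
by rewrite sumrB sum_delta subrr mul0rn.
Qed.

Lemma Phi_wt_nonrel (u : Z) : XPhi R i1 u ->
  exists2 a : XMon, ~~ Xis_rel_mon a & epsL (wt i1 a - u).
Proof.
case=> -[du /sigma_dual_nonneg_rep [b b_ge0 xbL]] notin_e.
have db : XdegM b = d%:Z.
  by case/andP: xbL => _ /eqP;
    rewrite XdegMB XdegMD du XdegM_eps add0r => /eqP; rewrite subr_eq0 => /eqP <-.
have [a ab] := expv_surj b_ge0 db.
have auL : epsL (wt i1 a - u).
  have -> : wt i1 a - u = b - (u + Xeps d i1) by rewrite /wt ab opprD addrA addrAC.
  exact: epsL_sym.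
exists a => //; apply/negP => /existsP[i /existsP[j /existsP[i' /existsP[j' /forallP a_rel]]]].
apply: notin_e; exists (i', j'), (i, j); apply: (epsL_XMeq i1 j0).
exact: epsL_trans (epsL_sym auL) (wt_rel_epsL (fun p => eqP (a_rel p))).
Qed.

End Phi.

Section MonomialSpans.
Variables (l d : nat) (C : fieldType).
Local Notation XMon := (XMon l d).
Local Notation V := (XPoly l d C).

Definition mon_span (A : pred XMon) : {vspace V} :=
  <<[seq Xmonv C a | a <- enum A]>>%VS.

Lemma XmonvE (a b : XMon) : Xmonv C a b = (b == a)%:R.
Proof. by rewrite ffunE. Qed.

Lemma XPoly_scaleE (k : C) (g : V) b : (k *: g) b = k * g b.
Proof. by rewrite ffunE. Qed.

Lemma mon_decomp (f : V) : f = \sum_a f a *: Xmonv C a.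
Proof.
apply/ffunP => b; rewrite sum_ffunE (bigD1 b) //= big1 => [|a ne].
  by rewrite addr0 XPoly_scaleE XmonvE eqxx mulr1.
by rewrite XPoly_scaleE XmonvE eq_sym (negbTE ne) mulr0.
Qed.

Lemma mon_spanP (A : pred XMon) (f : V) :
  f \in mon_span A <-> forall b, ~~ A b -> f b = 0.
Proof.
split.
  move=> /(@coord_span _ _ _ (in_tuple _)) -> b nAb; rewrite sum_ffunE big1 // => i _.
  rewrite XPoly_scaleE; have /mapP[a] : (in_tuple [seq Xmonv C a | a <- enum A])`_i \in
      [seq Xmonv C a | a <- enum A] by exact: mem_nth.
  rewrite mem_enum => Aa ->; rewrite XmonvE.
  by case: eqP => [ba|]; [move: nAb; rewrite ba -[A a]/(a \in A) Aa | rewrite mulr0].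
move=> fA; rewrite (mon_decomp f) (bigID A) /= [X in _ + X]big1 ?addr0 => [|a /fA ->];
  last by rewrite scale0r.
apply: memv_suml => a Aa; apply/memvZ/memv_span/map_f; by rewrite mem_enum.
Qed.

Lemma dim_mon_span (A : pred XMon) : \dim (mon_span A) = #|A|.
Proof.
rewrite cardE -(size_map (Xmonv C)); apply/eqP/(@freeP _ _ _ (in_tuple _)) => k k0 i.
have lt_size (j : 'I_(size [seq Xmonv C a | a <- enum A])) : (j < size (enum A))%N
  by rewrite -(size_map (Xmonv C)).
have a0 : XMon.
  by have := leq_ltn_trans (leq0n i) (lt_size i); case: (enum A) => // a0.
move/ffunP: k0 => /(_ (nth a0 (enum A) i)); rewrite sum_ffunE ffunE (bigD1 i) //= big1 ?addr0.
  by rewrite XPoly_scaleE (nth_map a0) ?lt_size // XmonvE eqxx mulr1.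
move=> j nji; rewrite XPoly_scaleE (nth_map a0) ?lt_size // XmonvE nth_uniq ?enum_uniq ?lt_size //.
by case: eqP => [/val_inj ji|]; [rewrite ji eqxx in nji | rewrite mulr0].
Qed.

Lemma mon_span_full : mon_span predT = fullv.
Proof. by apply/vspaceP => f; rewrite memvf; apply/mon_spanP. Qed.

End MonomialSpans.

Section Characters.
Variables (l d : nat) (C : numFieldType).
Local Notation I := (XIdx l d).
Local Notation Z := (XZLD l d).

Section Torus.
Variable lam : I -> C.
Hypothesis lam_neq0 : forall p, lam p != 0.

Lemma XchrD (u v : Z) : Xchr (u + v) lam = Xchr u lam * Xchr v lam.
Proof. by rewrite /Xchr -big_split; apply: eq_bigr => p _; rewrite ffunE expfzDr. Qed.

Lemma XchrN (u : Z) : Xchr (- u) lam = (Xchr u lam)^-1.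
Proof. by rewrite /Xchr -prodfV; apply: eq_bigr => p _; rewrite ffunE invr_expz. Qed.

Lemma Xchr_neq0 (u : Z) : Xchr u lam != 0.
Proof. by apply/prodf_neq0 => p _; apply: expfz_neq0. Qed.

Lemma Xchr_expv (a : XMon l d) : Xchr (expv a) lam = \prod_p lam p ^+ Xexpo a p.
Proof. by apply: eq_bigr => p _; rewrite ffunE. Qed.

Lemma Xchr_eps (i : 'I_l) : Xchr (Xeps d i) lam = \prod_(j < d) lam (i, j).
Proof.
rewrite /Xchr big_pairE (bigD1 i) //= [X in _ * X]big1 ?mulr1.
  by apply: eq_bigr => j _; rewrite ffunE /= eqxx expr1z.
by move=> r ne; apply: big1 => j _; rewrite ffunE /= (negbTE ne) expr0z.
Qed.

Lemma Xchr_wt (i1 : 'I_l) (a : XMon l d) :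
  Xchr (wt i1 a) lam = (\prod_p lam p ^+ Xexpo a p) / \prod_(j < d) lam (i1, j).
Proof. by rewrite /wt XchrD XchrN Xchr_expv Xchr_eps. Qed.

(* On T~ all row products agree, so an element of L (row constant, with
   vanishing column sum) has trivial character. *)
Lemma Xchr_epsL (i0 : 'I_l) (j0 : 'I_d) (v : Z) : Xin_Ttilde lam -> epsL v ->
  Xchr v lam = 1.
Proof.
move=> [_ rows_eq] vL; have col0 := epsL_col_sum j0 vL.
case/andP: vL => /row_constantP rc _.
pose P := \prod_(j < d) lam (i0, j).
have P_neq0 : P != 0 by apply/prodf_neq0 => j _.
rewrite /Xchr big_pairE; transitivity (\prod_(r < l) P ^ v (r, j0)).
  apply: eq_bigr => r _; rewrite /P -(rows_eq r i0).
  rewrite (big_morph (fun x => x ^ v (r, j0)) (fun x y => expfzMl x y _) (exp1rz _ _)).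
  by apply: eq_bigr => j _; congr (_ ^ _); apply: rc.
by rewrite -(big_morph (fun n => P ^ n) (fun x y => expfzDr x y P_neq0) (expr0z P)) col0.
Qed.

End Torus.

Lemma pow2_neq1 (n : int) : n != 0 -> (2 : C) ^ n != 1.
Proof.
have two_pow_neq1 k : (0 < k)%N -> (2 : C) ^+ k != 1.
  by move=> k_gt0; rewrite -natrX -[1]/(1%:R) eqr_nat -[1%N](expn0 2) eqn_exp2l // -lt0n.
case: n => k nz.
  by change ((2 : C) ^+ k != 1); apply: two_pow_neq1; rewrite lt0n -eqz_nat.
by rewrite NegzE -invr_expz invr_eq1 two_pow_neq1.
Qed.

Lemma row_sum_e (i : 'I_l) (p : I) : \sum_(j < d) ((i, j) == p)%:Z = (i == p.1)%:Z.
Proof.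
case: p => a b /=; case: (eqVneq i a) => [->|ne].
  by rewrite (bigD1 b) //= eqxx big1 ?addr0 // => j nj; rewrite xpair_eqE eqxx (negbTE nj).
by rewrite big1 // => j _; rewrite xpair_eqE (negbTE ne).
Qed.

(* The separating torus element is lambda = 2^w, with w of equal row sums
   pairing nontrivially with v: w = e_p - e_q if v is not row constant,
   w = 1 if v has nonzero degree. *)
Lemma Xchr_separates (v : Z) : ~~ epsL v ->
  exists2 lam : I -> C, Xin_Ttilde lam & Xchr v lam != 1.
Proof.
have pow2_torus (w : I -> int) :
    (forall i k, \sum_(j < d) w (i, j) = \sum_(j < d) w (k, j)) ->
    \sum_p w p * v p != 0 -> exists2 lam : I -> C, Xin_Ttilde lam & Xchr v lam != 1.
  have two_neq0 : (2 : C) != 0 by rewrite pnatr_eq0.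
  have pow2_sum (T : finType) (F : T -> int) : \prod_x (2 : C) ^ F x = 2 ^ (\sum_x F x).
    by rewrite (big_morph (fun n => (2 : C) ^ n) (fun x y => expfzDr x y two_neq0) (expr0z 2)).
  move=> w_rows wv; exists (fun p => 2 ^ w p); first split.
  - by move=> p; apply: expfz_neq0.
  - by move=> i k; rewrite !pow2_sum (w_rows i k).
  rewrite /Xchr (eq_bigr (fun p => 2 ^ (w p * v p))) => [|p _]; last by rewrite exprz_exp.
  by rewrite pow2_sum pow2_neq1.
case/nandP => [/forallPn[p /forallPn[q]]|degv].
  rewrite negb_imply => /andP[/eqP pq vpq].
  apply: (pow2_torus (fun r => (r == p)%:Z - (r == q)%:Z)).
    by move=> i k; rewrite !sumrB !row_sum_e pq; case: (i == q.1); case: (k == q.1).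
  rewrite (eq_bigr (fun r => v r *+ (r == p) - v r *+ (r == q))) => [|r _].
    by rewrite sumrB !sum_delta subr_eq0.
  by rewrite mulrBl; case: (r == p); case: (r == q); rewrite ?(mul1r, mul0r, mulr1n, mulr0n).
by apply: (pow2_torus (fun=> 1)) => //; rewrite (eq_bigr v) // => p _; rewrite mul1r.
Qed.

End Characters.

Section WeightSpaces.
Variables (l d : nat) (C : numFieldType) (i1 : 'I_l) (j0 : 'I_d).
Local Notation Z := (XZLD l d).
Local Notation XMon := (XMon l d).

Definition weight_mons (u : Z) : pred XMon :=
  [pred a | Xis_rel_mon a || epsL (wt i1 a - u)].

Lemma XWsp_mon_span : XWsp l d C = mon_span C [pred a | Xis_rel_mon a].
Proof. by []. Qed.

Lemma Xact_weightE (lam : XIdx l d -> C) (u : Z) (f : XPoly l d C) (b : XMon) :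
  (forall p, lam p != 0) ->
  (Xact i1 lam f - Xchr u lam *: f) b = f b * Xchr u lam * (Xchr (wt i1 b - u) lam - 1).
Proof.
move=> lam_neq0; rewrite ffunE [X in _ + X]ffunE XPoly_scaleE ffunE -mulrA -Xchr_wt //.
set w := wt i1 b - u; rewrite -[wt i1 b](subrK u) -/w XchrD //.
by rewrite mulrBr mulr1 (mulrC (Xchr u lam) (f b)) mulrA mulrAC.
Qed.

Lemma mon_span_weightP (u : Z) (f : XPoly l d C) :
  f \in mon_span C (weight_mons u) <-> Xin_weight i1 u f.
Proof.
split=> [/mon_spanP f_supp lam lam_T | f_wt].
  have lam_neq0 := lam_T.1.
  rewrite XWsp_mon_span; apply/mon_spanP => b /= nrel_b; rewrite Xact_weightE //.
  case: (boolP (epsL (wt i1 b - u))) => buL.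
    by rewrite (Xchr_epsL lam_neq0 i1 j0 lam_T buL) subrr mulr0.
  by rewrite f_supp ?mul0r //= negb_or nrel_b.
apply/mon_spanP => b /norP [nrel_b buL].
have [lam lam_T chr_neq1] := Xchr_separates C buL.
have := f_wt lam lam_T; rewrite XWsp_mon_span => /mon_spanP /(_ b nrel_b).
rewrite Xact_weightE; last exact: lam_T.1.
move/eqP; rewrite !mulf_eq0 subr_eq0 (negbTE chr_neq1) (negbTE (Xchr_neq0 lam_T.1 u)).
by rewrite !orbF => /eqP.
Qed.

End WeightSpaces.

Section WeightDimensions.
Variables (R : realType) (l d : nat) (C : numFieldType) (i1 : 'I_l) (j0 : 'I_d).
Local Notation Z := (XZLD l d).
Local Notation XMon := (XMon l d).
Local Notation W := (XWsp l d C).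
Local Notation P u := (mon_span C (weight_mons i1 u)).
Local Notation rel := [pred a : XMon | Xis_rel_mon a].

Lemma wt_nonrel_inj (a b : XMon) :
  ~~ Xis_rel_mon a -> epsL (wt i1 a - wt i1 b) -> a = b.
Proof.
move=> nrel abL; apply: Xexpo_inj => p.
have b_ge0 q : 0 <= expv b q by rewrite ffunE.
rewrite /wt opprB addrA subrK in abL.
by move/ffunP: (expv_epsL_nonrel j0 b_ge0 abL nrel) => /(_ p); rewrite !ffunE => -[].
Qed.

Lemma weight_mons_epsL (u v : Z) : epsL (u - v) -> weight_mons i1 u =i weight_mons i1 v.
Proof.
move=> uvL a; rewrite !inE; congr (_ || _).
by apply/idP/idP => [/epsL_trans|/epsL_trans]; apply=> //; apply: epsL_sym.
Qed.

Lemma weight_mons_wt (a : XMon) : ~~ Xis_rel_mon a ->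
  weight_mons i1 (wt i1 a) =i [predU1 a & rel].
Proof.
move=> nrel b; rewrite !inE /=.
case: (boolP (Xis_rel_mon b)) => [|nrel_b]; first by rewrite orbT.
rewrite orbF; apply/idP/eqP => [baL|->]; last by rewrite subrr epsL0.
by apply/esym/wt_nonrel_inj => //; apply: epsL_sym.
Qed.

Lemma dim_weight_space_wt (a : XMon) :
  ~~ Xis_rel_mon a -> \dim (P (wt i1 a)) = (\dim W + 1)%N.
Proof.
move=> nrel; rewrite dim_mon_span (eq_card (weight_mons_wt nrel)) cardU1 inE (negbTE nrel).
by rewrite XWsp_mon_span dim_mon_span addnC.
Qed.

Lemma dim_weight_space_Phi (u : Z) : XPhi R i1 u -> \dim (P u) = (\dim W + 1)%N.
Proof.
case/(Phi_wt_nonrel j0) => a nrel auL.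
by rewrite dim_mon_span -(eq_card (weight_mons_epsL auL)) -(dim_mon_span C) dim_weight_space_wt.
Qed.

Definition nonrel_weights : seq Z := [seq wt i1 a | a <- enum [pred a | ~~ Xis_rel_mon a]].

Lemma nonrel_weights_Phi (u : Z) : u \in nonrel_weights -> XPhi R i1 u.
Proof. by case/mapP => a; rewrite mem_enum => nrel ->; apply: wt_nonrel_Phi. Qed.

Lemma nonrel_weights_cover (u : Z) :
  XPhi R i1 u -> exists2 v, v \in nonrel_weights & XMeq u v.
Proof.
case/(Phi_wt_nonrel j0) => a nrel auL; exists (wt i1 a); first by rewrite map_f ?mem_enum.
exact/(epsL_XMeq i1 j0)/epsL_sym.
Qed.

Lemma nonrel_weights_uniq (n m : nat) :
  (n < size nonrel_weights)%N -> (m < size nonrel_weights)%N ->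
  XMeq (nth 0 nonrel_weights n) (nth 0 nonrel_weights m) -> n = m.
Proof.
rewrite size_map => n_lt m_lt; have a0 : XMon by move: n_lt; case: (enum _) => // a0.
rewrite !(nth_map a0) // => /XMeq_epsL /wt_nonrel_inj.
have := mem_nth a0 n_lt; rewrite mem_enum => /[swap] /[apply] /eqP.
by rewrite nth_uniq ?enum_uniq // => /eqP.
Qed.

Lemma weight_spaces_span : (W + \sum_(u <- nonrel_weights) P u = fullv)%VS.
Proof.
apply/eqP; rewrite eqEsubv subvf /=; apply/subvP => f _.
rewrite (mon_decomp f); apply: memv_suml => b _; apply: memvZ.
case: (boolP (Xis_rel_mon b)) => [rel_b|nrel_b].
  by apply: (subvP (addvSl _ _)); apply/memv_span/map_f; rewrite mem_enum.
apply: (subvP (addvSr _ _)).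
have b_wt : wt i1 b \in nonrel_weights by rewrite map_f ?mem_enum.
rewrite (big_rem _ b_wt) /=; apply: (subvP (addvSl _ _)).
apply/mon_spanP => c; rewrite XmonvE; case: eqP => [->|_ _] //.
by rewrite /weight_mons inE subrr epsL0 orbT.
Qed.

Lemma codim_XWsp : (\dim (fullv : {vspace XPoly l d C}) - \dim W
  = \sum_(u <- nonrel_weights) (\dim (P u) - \dim W))%N.
Proof.
rewrite big_map big_enum /= (eq_bigr (fun=> 1%N)) => [|a]; last first.
  by rewrite inE => nrel; rewrite dim_weight_space_wt // addnC addnK.
rewrite sum1_card -(mon_span_full l d C) XWsp_mon_span !dim_mon_span.
by rewrite -(cardC rel) addKn.
Qed.

End WeightDimensions.

Theorem mainTheorem18 (R : realType) (l d : nat) (hl : (2 <= l)%N) (hd : (2 <= d)%N) :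
  let C := R[i] in
  let i1 := Xrow1 hl in
  let W := XWsp l d C in
  exists P : XZLD l d -> {vspace XPoly l d C},
    (forall u f, f \in P u <-> Xin_weight i1 u f) /\
    (forall u, XPhi R i1 u -> (\dim (P u) = \dim W + 1)%N) /\
    exists s : seq (XZLD l d),
      (forall u, u \in s -> XPhi R i1 u) /\
      (forall u, XPhi R i1 u -> exists2 v, v \in s & XMeq u v) /\
      (forall (n m : nat), (n < size s)%N -> (m < size s)%N ->
          XMeq (nth 0 s n) (nth 0 s m) -> n = m) /\
      (W + \sum_(u <- s) P u = fullv)%VS /\
      (\dim (fullv : {vspace XPoly l d C}) - \dim W
         = \sum_(u <- s) (\dim (P u) - \dim W))%N.
Proof.
move=> C i1 W; pose j0 : 'I_d := Ordinal (ltnW hd).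
exists (fun u => mon_span C (weight_mons i1 u)); split.
  by move=> u f; apply: (mon_span_weightP i1 j0).
split; first exact: (dim_weight_space_Phi C j0).
exists (nonrel_weights d i1); split; first exact: nonrel_weights_Phi.
split; first exact: (nonrel_weights_cover j0).
split; first exact: (nonrel_weights_uniq j0).
split; first exact: weight_spaces_span.
exact: codim_XWsp.
Qed.
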